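(* Let $(X,\tau)$ be a $T_1$ topological space. Then $X$ is a D-space if and only if for every continuous map $f:(X,\tau)\to(\mathcal P(X),\tau_{\mathcal S(X)})$ with $x\in f(x)$ for all $x\in X$, there exist a continuous neighborhood refinement map $f_*$ of $f$ and a set $D\subseteq X$ such that the map $g:(X,\tau)\to(\mathcal P(D),\tau_{\mathcal S(D)})$, $g(x)=f_*(x)\cap D$, is continuous, satisfies $g^{-1}(\{\emptyset\})=\emptyset$, and satisfies $g(d)=\{d\}$ for all $d\in D$.
   Context: For a set $A$ and $a\in A$, let $\mathcal U_A(a)=\{B\subseteq A: a\in B\}$. The principal ultrafilter topology $\tau_{\mathcal S(A)}$ on $\mathcal P(A)$ is the topology generated by the subbase $\{\mathcal U_A(a): a\in A\}$. Given a continuous map $f:(X,\tau)\to(\mathcal P(X),\tau_{\mathcal S(X)})$ with $x\in f(x)$ for all $x$, a continuous neighborhood refinement map of $f$ is a continuous map $f_*:(X,\tau)\to(\mathcal P(X),\tau_{\mathcal S(X)})$ with $x\in f_*(x)\subseteq f(x)$ for all $x$. An open neighborhood assignment is a function $N:X\to\tau$ with $x\in N(x)$ for all $x$. $X$ is a D-space if for every open neighborhood assignment $N$ there is a closed discrete $D\subseteq X$ with $\bigcup_{d\in D}N(d)=X$. *)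

From HB Require Import structures.
From mathcomp Require Import all_boot all_order.
From mathcomp Require Import all_classical topology.
From mathcomp Require Import topology.
Set Implicit Arguments. Unset Strict Implicit. Unset Printing Implicit Defensive.
Local Open Scope classical_set_scope.

Definition is_topology (T : Type) (O : set (set T)) : Prop :=
  [/\ O setT,
      (forall U V, O U -> O V -> O (U `&` V)) &
      (forall F : set (set T), F `<=` O -> O (\bigcup_(U in F) U))].

Definition generated_open (T : Type) (S : set (set T)) : set (set T) :=
  fun W => forall O : set (set T), is_topology O -> S `<=` O -> O W.

Definition U_ (A : Type) (a : A) : set (set A) := [set B | B a].

(* open sets of the principal ultrafilter topology tau_{S(A)} on P(A) *)
Definition pu_open (A : Type) : set (set (set A)) :=
  generated_open [set U_ a | a in [set: A]].

Definition continuous_PA (X : topologicalType) (A : Type) (f : X -> set A) : Prop :=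
  forall W, pu_open W -> open (f @^-1` W).

Definition cont_nbhd_refinement (X : topologicalType) (f fs : X -> set X) : Prop :=
  continuous_PA fs /\ (forall x, fs x x /\ fs x `<=` f x).

Definition open_nbhd_assignment (X : topologicalType) (N : X -> set X) : Prop :=
  forall x, open (N x) /\ N x x.

Definition closed_discrete (X : topologicalType) (D : set X) : Prop :=
  closed D /\
  (forall d, D d -> exists U : set X, [/\ open U, U d & U `&` D = [set d]]).

Definition D_space (X : topologicalType) : Prop :=
  forall N : X -> set X, open_nbhd_assignment N ->
    exists D : set X, closed_discrete D /\ \bigcup_(d in D) N d = setT.

(* g(x) = fs(x) ∩ D, as an element of P(D) *)
Definition trace_map (X : topologicalType) (fs : X -> set X) (D : set X)
  : X -> set {x : X | D x} :=
  fun x => [set d : {x : X | D x} | fs x (proj1_sig d)].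
Arguments trace_map [X] fs D _ _.

(* A continuous f with x ∈ f x is the same thing as an open neighbourhood
   assignment N a := {x | a ∈ f x}.  If D is closed discrete and the N d (d ∈ D)
   cover X, shrink f at the points of D only: f_* x := f x ∩ {a | x ∈ U a} for
   x ∈ D, where U a isolates a in D, and f_* x := f x otherwise (closedness of D
   keeps f_* continuous).  Then f_* x meets D for every x, and exactly in {d}
   at each d ∈ D.
   Conversely, the trace conditions say that every x lies in some f_*^-1(d)
   with d ∈ D, and that f_*^-1(d) ∩ D = {d}; so these open sets witness the
   discreteness of D and, together with T1, the openness of ~` D. *)
From HB Require Import structures.
From mathcomp Require Import all_boot all_order.
From mathcomp Require Import all_classical topology.
Local Open Scope classical_set_scope.

Lemma continuous_PAP (X : topologicalType) (A : Type) (f : X -> set A) :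
  continuous_PA f <-> forall a, open [set x | f x a].
Proof.
split=> [fc a | fop W Wopen].
  by apply: (fc (U_ a)) => O _; apply; exists a.
apply: (Wopen [set W | open (f @^-1` W)]).
  split=> /= [|U V Uo Vo|F FO].
  - by rewrite preimage_setT; exact: openT.
  - by rewrite preimage_setI; exact: openI.
  - by rewrite preimage_bigcup; apply: bigcup_open => U /FO.
by move=> _ [a _ <-]; exact: fop.
Qed.

Lemma closed_discrete_isolating {X : topologicalType} {D : set X} :
  closed_discrete D ->
  exists U : X -> set X,
    (forall d, open (U d) /\ U d d) /\ (forall d, D d -> U d `&` D = [set d]).
Proof.
move=> [_ Ddisc].
have /choice[U HU] : forall d, exists U : set X,
    [/\ open U, U d & D d -> U `&` D = [set d]].
  move=> d; have [Dd | nDd] := pselect (D d).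
    by have [U [Uo Ud UD]] := Ddisc d Dd; exists U.
  by exists setT; split => //; exact: openT.
by exists U; split=> d; case: (HU d).
Qed.

Definition trace_refinement_property (X : topologicalType) : Prop :=
  forall f : X -> set X, continuous_PA f -> (forall x, f x x) ->
    exists (fs : X -> set X) (D : set X),
      [/\ cont_nbhd_refinement f fs,
          continuous_PA (trace_map fs D),
          (trace_map fs D) @^-1` [set set0] = set0 &
          (forall d : sig D, trace_map fs D (proj1_sig d) = [set d])].

Lemma D_space_trace_refinement (X : topologicalType) :
  D_space X -> trace_refinement_property X.
Proof.
move=> XD f /continuous_PAP fop frefl.
have [D [Dcd Dcover]] :=
  XD (fun a => [set x | f x a]) (fun x => conj (fop x) (frefl x)).
have [U [Uop UD]] := closed_discrete_isolating Dcd.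
pose fs x := f x `&` [set a | ~ D x \/ U a x].
have fsop a : open [set x | fs x a].
  apply: openI; first exact: fop.
  by apply: openU; [exact/closed_openC/Dcd.1 | case: (Uop a)].
have fsrefl x : fs x x.
  split; first exact: frefl.
  by have [Dx|] := pselect (D x); [right; case: (Uop x) | left].
exists fs, D; split.
- by split=> [|x]; [exact/continuous_PAP | split=> // a []].
- by apply/continuous_PAP => -[a Da]; exact: fsop.
- apply/seteqP; split=> // x /= trx0.
  have [d Dd fxd] : (\bigcup_(d in D) [set x | f x d]) x by rewrite Dcover.
  have [Dx | nDx] := pselect (D x).
    by have : trace_map fs D x (exist D x Dx) := fsrefl x; rewrite trx0.
  have : trace_map fs D x (exist D d Dd) by split=> //; left.
  by rewrite trx0.
- move=> [d Dd] /=; apply/seteqP; split=> [[e De] [_ [//|Ued]] | _ ->].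
    have : (U e `&` D) d by [].
    rewrite UD //= => de; subst e.
    by rewrite (Prop_irrelevance De Dd).
  exact: fsrefl.
Qed.

Section TraceConditions.
Context {X : topologicalType} {fs : X -> set X} {D : set X}.
Hypotheses (trace_neq0 : trace_map fs D @^-1` [set set0] = set0)
  (trace_set1 : forall d : sig D, trace_map fs D (proj1_sig d) = [set d]).

Lemma trace_meets x : exists2 d, D d & fs x d.
Proof.
have /set0P[[d Dd] fsxd] : trace_map fs D x != set0.
  apply/eqP => trx0.
  by have : (trace_map fs D @^-1` [set set0]) x by []; rewrite trace_neq0.
by exists d.
Qed.

Lemma trace_set1_eq x d : D x -> D d -> fs x d -> x = d.
Proof.
move=> Dx Dd fsxd.
have : trace_map fs D x (exist D d Dd) := fsxd.
by rewrite (trace_set1 (exist D x Dx)) => /(congr1 sval).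
Qed.

Lemma trace_closed_discrete :
  accessible_space X -> (forall a, open [set x | fs x a]) -> (forall x, fs x x) ->
  closed_discrete D.
Proof.
move=> XT1 fsop fsrefl; split.
  have DC : ~` D = \bigcup_(d in D) ([set x | fs x d] `&` ~` [set d]).
    apply/seteqP; split=> [x nDx | x [d Dd [fsxd xd]] Dx].
      have [d Dd fsxd] := trace_meets x.
      by exists d => //; split=> // xd; apply: nDx; rewrite xd.
    exact/xd/trace_set1_eq.
  rewrite -[D]setCK DC; apply/open_closedC/bigcup_open => d _.
  exact/openI/closed_openC/accessible_closed_set1.
move=> d Dd; exists [set x | fs x d]; split=> //.
apply/seteqP; split=> [x [fsxd Dx] | _ ->]; first exact: trace_set1_eq.
by split.
Qed.

End TraceConditions.

Lemma trace_refinement_D_space (X : topologicalType) :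
  accessible_space X -> trace_refinement_property X -> D_space X.
Proof.
move=> XT1 refine N Nop.
have fc : continuous_PA (fun x => [set a | N a x]).
  by apply/continuous_PAP => a; case: (Nop a).
have [fs [D [[/continuous_PAP fsop fsref] _ trace_neq0 trace_set1]]] :=
  refine _ fc (fun x => (Nop x).2).
exists D; split.
  apply: (trace_closed_discrete trace_neq0 trace_set1 XT1 fsop).
  by move=> x; case: (fsref x).
apply/seteqP; split=> // x _.
have [d Dd fsxd] := trace_meets trace_neq0 x.
by exists d => //; case: (fsref x) => _ /(_ d fsxd).
Qed.

Theorem mainTheorem2 (X : topologicalType) (hT1 : accessible_space X) :
  D_space X <->
  (forall f : X -> set X, continuous_PA f -> (forall x, f x x) ->
     exists (fs : X -> set X) (D : set X),
       [/\ cont_nbhd_refinement f fs,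
           continuous_PA (trace_map fs D),
           (trace_map fs D) @^-1` [set set0] = set0 &
           (forall d : sig D, trace_map fs D (proj1_sig d) = [set d])]).
Proof.
split; first exact: D_space_trace_refinement.
exact: trace_refinement_D_space hT1.
Qed.
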